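(* Let $n\ge2$, $\beta\ge0$, $\alpha>-1$ with $\alpha<\beta-\frac12$. Then there is a constant $C$ depending only on $n,\alpha,\beta$ such that for all $0<\delta<\frac12$, $$\int_0^1\!\!\int_0^1\!\!\int_0^1\frac{s_1^\alpha\,t^{2n-3}\,ds_1\,ds_2\,dt}{(\delta+s_1+s_2+t^2)^{2+\beta}(\delta+s_1+s_2+t)^{2n-3}}\le C\,\delta^{\alpha-\beta+\frac12}.$$ *)

From HB Require Import structures.
From mathcomp Require Import all_boot all_order all_algebra.
From mathcomp Require Import all_classical all_reals all_analysis.
Set Implicit Arguments. Unset Strict Implicit. Unset Printing Implicit Defensive.
Import Order.TTheory GRing.Theory Num.Theory.
Import numFieldNormedType.Exports.
Local Open Scope classical_set_scope.
Local Open Scope ring_scope.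

Definition lemma6p5_integrand (R : realType) (n : nat) (alpha beta delta : R)
  (s1 s2 t : R) : R :=
  (s1 `^ alpha) * t ^+ (2 * n - 3)
  / ((delta + s1 + s2 + t ^+ 2) `^ (2 + beta)
     * (delta + s1 + s2 + t) ^+ (2 * n - 3)).

Definition lemma6p5_integral (R : realType) (n : nat) (alpha beta delta : R)
  : \bar R :=
  (\int[@lebesgue_measure R]_(s1 in `[0%R, 1%R])
    \int[@lebesgue_measure R]_(s2 in `[0%R, 1%R])
      \int[@lebesgue_measure R]_(t in `[0%R, 1%R])
        (lemma6p5_integrand n alpha beta delta s1 s2 t)%:E)%E.

From HB Require Import structures.
From mathcomp Require Import all_boot all_order all_algebra.
From mathcomp Require Import all_classical all_reals all_analysis.
From mathcomp Require Import measurable_realfun.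
From mathcomp.algebra_tactics Require Import ring lra.
Import Order.TTheory GRing.Theory Num.Theory.
Import numFieldNormedType.Exports.
Local Open Scope ring_scope.

(* Write [D = delta + s1 + s2 + t^2] and split [2 + beta = p1 + p2 + p3] with
   [p1 = alpha + 1 + e], [p2 = 1 + e], [p3 = 1/2 + e], where
   [3 e = beta - alpha - 1/2 > 0]; each [pi] exceeds by [e] the exponent at which
   the corresponding one-variable integral stops converging at [0].  Since [D]
   dominates [delta + s1], [delta + s2] and [(sqrt delta + t)^2 / 2], and
   [t <= delta + s1 + s2 + t], the integrand is at most [2^p3] times a product
   of kernels [s^a (c + s)^(-q)] in the three variables, with [q > a + 1].
   Splitting [[0, 1]] at [s = c] shows that such a kernel integrates to
   [O(c^(a + 1 - q))], and the three resulting powers of [delta] multiply to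
   [delta^(-3 e) = delta^(alpha - beta + 1/2)]. *)

Section nonneg_integral_bounds.
Local Open Scope classical_set_scope.
Local Open Scope ereal_scope.
Context {d} {T : measurableType d} {R : realType} {mu : {measure set T -> \bar R}}.
Context {D : set T} (mD : measurable D).

(* The integral of a nonnegative function is a supremum over the simple
   functions below it, so it is monotone without any measurability; this spares
   us proving that the partial integrals of the integrand are measurable. *)
Lemma ge0_le_integral_nomeas (f g : T -> \bar R) :
  (forall x, D x -> 0 <= f x) -> (forall x, D x -> f x <= g x) ->
  \int[mu]_(x in D) f x <= \int[mu]_(x in D) g x.
Proof.
move=> f0 fg; have g0 x : D x -> 0 <= g x.
  by move=> Dx; exact: le_trans (f0 x Dx) (fg x Dx).
rewrite [leLHS]ge0_integralE// [leRHS]ge0_integralE//.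
apply: le_ereal_sup => _ [h /= hf <-]; exists h => //= x.
apply: le_trans (hf x) _; rewrite /patch; case: ifP => // /set_mem; exact: fg.
Qed.

Lemma ge0_integral_le_scale (f : T -> \bar R) (g : T -> R) (k M : R) :
  (0 <= k)%R -> measurable_fun D g -> (forall x, D x -> 0 <= g x)%R ->
  (forall x, D x -> 0 <= f x) -> (forall x, D x -> f x <= (k * g x)%:E) ->
  \int[mu]_(x in D) (g x)%:E <= M%:E ->
  \int[mu]_(x in D) f x <= (k * M)%:E.
Proof.
move=> k0 mg g0 f0 fkg gM.
apply: le_trans (@ge0_le_integral_nomeas f (fun x => k%:E * (g x)%:E) f0 _) _.
  by move=> x /fkg; rewrite EFinM.
rewrite ge0_integralZl_EFin //; last exact/measurable_EFinP.
by rewrite EFinM lee_wpmul2l ?lee_fin.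
Qed.

Lemma integral3_le_prod {f : T -> T -> T -> R} {g1 g2 g3 : T -> R}
    {k M1 M2 M3 : R} :
  (0 <= k)%R ->
  measurable_fun D g1 -> measurable_fun D g2 -> measurable_fun D g3 ->
  (forall x, D x -> 0 <= g1 x)%R -> (forall x, D x -> 0 <= g2 x)%R ->
  (forall x, D x -> 0 <= g3 x)%R ->
  \int[mu]_(x in D) (g1 x)%:E <= M1%:E ->
  \int[mu]_(x in D) (g2 x)%:E <= M2%:E ->
  \int[mu]_(x in D) (g3 x)%:E <= M3%:E ->
  (forall x y z, D x -> D y -> D z -> 0 <= f x y z)%R ->
  (forall x y z, D x -> D y -> D z -> f x y z <= k * (g1 x * g2 y * g3 z))%R ->
  \int[mu]_(x in D) \int[mu]_(y in D) \int[mu]_(z in D) (f x y z)%:E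
    <= (k * M1 * M2 * M3)%:E.
Proof.
move=> k0 mg1 mg2 mg3 g10 g20 g30 gM1 gM2 gM3 f0 fg.
have M_ge0 (g : T -> R) M : (forall x, D x -> 0 <= g x)%R ->
    \int[mu]_(x in D) (g x)%:E <= M%:E -> (0 <= M)%R.
  move=> g0 gM; rewrite -lee_fin; apply: le_trans gM.
  exact: integral_ge0.
have M30 := M_ge0 _ _ g30 gM3; have M20 := M_ge0 _ _ g20 gM2.
have inner_ge0 x y : D x -> D y -> 0 <= \int[mu]_(z in D) (f x y z)%:E.
  by move=> Dx Dy; apply: integral_ge0 => z Dz; rewrite lee_fin f0.
have inner x y : D x -> D y ->
    \int[mu]_(z in D) (f x y z)%:E <= ((k * g1 x * g2 y) * M3)%:E.
  move=> Dx Dy; apply: (@ge0_integral_le_scale _ g3) => //.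
  - by rewrite !mulr_ge0 ?g10 ?g20.
  - by move=> z Dz; rewrite lee_fin f0.
  - by move=> z Dz; rewrite lee_fin (le_trans (fg _ _ _ Dx Dy Dz)) // !mulrA.
have middle x : D x ->
    \int[mu]_(y in D) \int[mu]_(z in D) (f x y z)%:E <= ((k * g1 x * M3) * M2)%:E.
  move=> Dx; apply: (@ge0_integral_le_scale _ g2) => //.
  - by rewrite !mulr_ge0 ?g10.
  - by move=> y; exact: inner_ge0.
  - by move=> y Dy; rewrite (le_trans (inner x y Dx Dy)) // lee_fin; lra.
apply: le_trans (@ge0_integral_le_scale _ g1 (k * M3 * M2) _ _ mg1 g10 _ _ gM1) _.
- by rewrite !mulr_ge0.
- by move=> x Dx; apply: integral_ge0 => y; exact: inner_ge0.
- by move=> x Dx; rewrite (le_trans (middle x Dx)) // lee_fin; lra.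
by rewrite lee_fin; lra.
Qed.

End nonneg_integral_bounds.

Section powR_integrals.
Local Open Scope classical_set_scope.
Context {R : realType}.
Local Notation mu := (@lebesgue_measure R).

Lemma ler_powRN (x y q : R) : 0 < x -> x <= y -> 0 <= q ->
  y `^ (- q) <= x `^ (- q).
Proof.
move=> x0 xy q0; have y0 := lt_le_trans x0 xy.
rewrite !powRN lef_pV2 ?posrE ?powR_gt0 //.
by apply: ge0_ler_powR => //; rewrite nnegrE ltW.
Qed.

Lemma powRN_addr_le {x y1 y2 y3 p1 p2 p3 : R} :
  0 < y1 <= x -> 0 < y2 <= x -> 0 < y3 <= x -> 0 <= p1 -> 0 <= p2 -> 0 <= p3 ->
  x `^ (- (p1 + p2 + p3)) <= y1 `^ (- p1) * y2 `^ (- p2) * y3 `^ (- p3).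
Proof.
move=> /andP[y10 y1x] /andP[y20 y2x] /andP[y30 y3x] p10 p20 p30.
rewrite !opprD !powRD ?(gt_eqF (lt_le_trans y10 y1x)) ?implybT //.
apply: ler_pM; rewrite ?mulr_ge0 ?powR_ge0 //; last exact: ler_powRN.
by apply: ler_pM; rewrite ?powR_ge0 //; exact: ler_powRN.
Qed.

Lemma powRN_sqr_half (u p : R) : 0 <= u ->
  (u ^+ 2 / 2) `^ (- p) = 2 `^ p * u `^ (- (2 * p)).
Proof.
move=> u0; have two_p : 2 `^ p != 0 :> R by rewrite gt_eqF ?powR_gt0.
have half_p : 2^-1 `^ p = (2 `^ p)^-1 :> R.
  apply: (mulfI two_p); rewrite -powRM ?invr_ge0 ?ler0n // mulfV ?pnatr_eq0 //.
  by rewrite powR1 mulfV.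
rewrite powRM ?invr_ge0 ?ler0n ?sqr_ge0 // (powRN 2^-1) half_p invrK mulrC.
by rewrite -mulrN powRrM powR_mulrn.
Qed.

Lemma is_derive_powR_primitive (r z : R) : 0 < z -> r + 1 != 0 ->
  is_derive z 1 (fun s : R => (r + 1)^-1 * s `^ (r + 1)) (z `^ r).
Proof.
move=> z0 r1; have := is_deriveZ (r + 1)^-1 (is_derive1_powR (r + 1) z0).
by rewrite /GRing.scale /= mulrA mulVf // mul1r addrK.
Qed.

Lemma integral_powR_cc (r x y : R) : 0 < x -> x < y -> r + 1 != 0 ->
  (\int[mu]_(s in `[x, y]) (s `^ r)%:E =
   ((r + 1)^-1 * (y `^ (r + 1) - x `^ (r + 1)))%:E)%E.
Proof.
move=> x0 xy r1; set F := fun s : R => (r + 1)^-1 * s `^ (r + 1).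
have F'r (z : R) : 0 < z -> is_derive z 1 F (z `^ r).
  by move=> z0; exact: is_derive_powR_primitive.
have Fc (z : R) : 0 < z -> {for z, continuous F}.
  move=> z0; apply: differentiable_continuous; rewrite -derivable1_diffP.
  by have [] := F'r z z0.
rewrite mulrBr EFinB; apply: (@continuous_FTC2 _ _ F) => //.
- apply: derivable_within_continuous => z; rewrite in_itv/= => /andP[xz _].
  by have [] := is_derive1_powR r (lt_le_trans x0 xz).
- split.
  + move=> z; rewrite in_itv/= => /andP[xz _].
    by have [] := F'r z (lt_trans x0 xz).
  + by apply: cvg_at_right_filter; exact: Fc.
  + by apply: cvg_at_left_filter; apply: Fc; exact: lt_trans xy.
- move=> z; rewrite in_itv/= => /andP[xz _].
  by rewrite derive1E; have [_ ->] := F'r z (lt_trans x0 xz).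
Qed.

(* Monotone convergence, truncating the singularity at [0] below [c / k.+2]. *)
Lemma integral_powR_oc0_le (a c : R) : -1 < a -> 0 < c ->
  (\int[mu]_(s in `]0%R, c]) (s `^ a)%:E <= ((a + 1)^-1 * c `^ (a + 1))%:E)%E.
Proof.
move=> a1 c0; have a10 : 0 < a + 1 by lra.
pose e k := c / k.+2%:R.
have e_gt0 k : 0 < e k by rewrite divr_gt0.
have e_lt k : e k < c by rewrite ltr_pdivrMr // ltr_pMr // ltr1n.
have e_nonincr m n : (m <= n)%N -> e n <= e m.
  by move=> mn; rewrite ler_pdivrMr // mulrAC ler_pdivlMr // ler_pM2l // ler_nat.
pose g k := (fun s : R => (s `^ a)%:E) \_ `[e k, +oo[.
have g_ge0 k (x : R) : (0 <= g k x)%E.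
  by rewrite /g /patch; case: ifP; rewrite // lee_fin powR_ge0.
have g_nd (x : R) : nondecreasing_seq (g ^~ x).
  move=> m n mn; rewrite /g /patch; case: ifP => [/set_mem|_]; last exact: g_ge0.
  rewrite /= in_itv /= andbT => emx; rewrite ifT //; apply/mem_set.
  by rewrite /= in_itv /= andbT (le_trans (e_nonincr _ _ mn)).
have g_lim (x : R) : `]0, c] x -> limn (g ^~ x) = (x `^ a)%:E.
  rewrite /= in_itv /= => /andP[x0 _]; apply/cvg_lim => //; apply: cvg_near_cst.
  near=> k.
  have Nk : (Num.truncn (c / x) <= k)%N by near: k; exists (Num.truncn (c / x)).
  rewrite /g /patch ifT //; apply/mem_set; rewrite /= in_itv /= andbT.
  rewrite /e ler_pdivrMr // -ler_pdivrMl //; apply: ltW.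
  by apply: lt_le_trans (truncnS_gt _) _; rewrite ler_nat mulrC ltnS (leq_trans Nk).
have mg k : measurable_fun `]0, c] (g k).
  apply/measurable_restrict => //; apply: measurable_funTS.
  by apply: measurableT_comp => //; exact: measurable_powR.
have -> : (\int[mu]_(s in `]0%R, c]) (s `^ a)%:E =
    \int[mu]_(s in `]0%R, c]) limn (g ^~ s))%E.
  by apply: eq_integral => x /set_mem /g_lim.
rewrite monotone_convergence //.
apply: lime_le.
  apply: ereal_nondecreasing_is_cvgn => m n mn.
  by apply: ge0_le_integral => //; [exact: mg|exact: mg|move=> x _; apply: g_nd].
apply: nearW => k; rewrite -integral_mkcondr.
have -> : `]0, c] `&` `[e k, +oo[ = `[e k, c] :> set R.
  apply/seteqP; split => s /=; rewrite !in_itv /= ?andbT.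
    by move=> [/andP[_ ->] ->].
  by move=> /andP[es ->]; rewrite (lt_le_trans (e_gt0 k) es).
rewrite integral_powR_cc ?gt_eqF // lee_fin ler_wpM2l ?invr_ge0 ?(ltW a10) //.
by rewrite lerBlDr lerDl powR_ge0.
Unshelve. all: by end_near. Qed.

Definition powR_kernel (a q c s : R) : R := s `^ a * (c + s) `^ (- q).

Lemma powR_kernel_ge0 (a q c s : R) : 0 <= powR_kernel a q c s.
Proof. by rewrite mulr_ge0 ?powR_ge0. Qed.

Lemma measurable_powR_kernel (a q c : R) : measurable_fun setT (powR_kernel a q c).
Proof.
apply: measurable_funM; first exact: measurable_powR.
apply: (measurableT_comp (measurable_powR _)).
exact: measurable_funD.
Qed.

Lemma integral_powR_kernel_oc0_le {a q c : R} : -1 < a -> 0 <= q -> 0 < c ->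
  (\int[mu]_(s in `]0%R, c]) (powR_kernel a q c s)%:E <=
   (c `^ (- q) * ((a + 1)^-1 * c `^ (a + 1)))%:E)%E.
Proof.
move=> a1 q0 c0; rewrite EFinM.
apply: le_trans (_ : \int[mu]_(s in `]0%R, c]) ((c `^ (- q))%:E * (s `^ a)%:E) <= _)%E.
  apply: ge0_le_integral => //.
  - by move=> s _; rewrite lee_fin powR_kernel_ge0.
  - by apply/measurable_funTS/measurable_EFinP; exact: measurable_powR_kernel.
  - apply/measurable_funTS/measurable_EFinP.
    by apply: measurable_funM => //; exact: measurable_powR.
  - move=> s; rewrite /= in_itv /= => /andP[s0 _].
    rewrite -EFinM lee_fin /powR_kernel mulrC ler_wpM2r ?powR_ge0 //.
    by apply: ler_powRN => //; rewrite lerDl ltW.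
rewrite ge0_integralZl_EFin ?powR_ge0 //; last 2 first.
- by move=> s _; rewrite lee_fin powR_ge0.
- by apply/measurable_funTS/measurable_EFinP; exact: measurable_powR.
by rewrite lee_pmul2l ?lte_fin ?powR_gt0 //; exact: integral_powR_oc0_le.
Qed.

Lemma integral_powR_kernel_oc1_le {a q c : R} :
  a + 1 < q -> 0 <= q -> 0 < c -> c < 1 ->
  (\int[mu]_(s in `]c, 1%R]) (powR_kernel a q c s)%:E <=
   ((q - (a + 1))^-1 * c `^ (a + 1 - q))%:E)%E.
Proof.
move=> aq q0 c0 c1; have qa0 : a - q + 1 != 0 by rewrite lt_eqF //; lra.
apply: le_trans (_ : \int[mu]_(s in `]c, 1%R]) (s `^ (a - q))%:E <= _)%E.
  apply: ge0_le_integral => //.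
  - by move=> s _; rewrite lee_fin powR_kernel_ge0.
  - by apply/measurable_funTS/measurable_EFinP; exact: measurable_powR_kernel.
  - by apply/measurable_funTS/measurable_EFinP; exact: measurable_powR.
  - move=> s; rewrite /= in_itv /= => /andP[cs _]; have s0 := lt_trans c0 cs.
    rewrite lee_fin powRD ?(gt_eqF s0) ?implybT // ler_wpM2l ?powR_ge0 //.
    by apply: ler_powRN => //; lra.
rewrite integral_itv_obnd_cbnd; last first.
  by apply/measurable_funTS/measurable_EFinP; exact: measurable_powR.
rewrite integral_powR_cc // powR1 lee_fin.
have -> : a - q + 1 = - (q - (a + 1)) by ring.
have -> : a + 1 - q = - (q - (a + 1)) by ring.
rewrite invrN mulNr -mulrN opprB ler_wpM2l ?invr_ge0 ?subr_ge0 ?(ltW aq) //.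
by rewrite lerBlDr lerDl.
Qed.

Definition powR_kernel_const (a q : R) : R := (a + 1)^-1 + (q - (a + 1))^-1.

Lemma integral_powR_kernel_le {a q c : R} : -1 < a -> a + 1 < q -> 0 < c -> c < 1 ->
  (\int[mu]_(s in `[0%R, 1%R]) (powR_kernel a q c s)%:E <=
   (powR_kernel_const a q * c `^ (a + 1 - q))%:E)%E.
Proof.
move=> a1 aq c0 c1; have q0 : 0 <= q by lra.
have mk : measurable_fun setT (EFin \o powR_kernel a q c).
  by apply/measurable_EFinP; exact: measurable_powR_kernel.
rewrite -integral_itv_obnd_cbnd; last exact: measurable_funTS.
rewrite (@itv_bndbnd_setU _ _ _ (BRight c)) ?bnd_simp ?(ltW c0) ?(ltW c1) //.
rewrite ge0_integral_setU //; last 3 first.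
- exact: measurable_funTS.
- by move=> s _; rewrite lee_fin powR_kernel_ge0.
- apply/disjoint_neitv; rewrite /= joinEtotal meetEtotal /=.
  by rewrite max_r ?min_l ?bnd_simp ?(ltW c0) ?(ltW c1) // /neitv set_itvxx eqxx.
apply: le_trans (leeD (integral_powR_kernel_oc0_le a1 q0 c0)
                      (integral_powR_kernel_oc1_le aq q0 c0 c1)) _.
rewrite -EFinD lee_fin mulrDl mulrCA -powRD ?(gt_eqF c0) ?implybT //.
by rewrite (addrC (- q)).
Qed.

End powR_integrals.


Section lemma6p5_bounds.
Context {R : realType} (n : nat) {alpha beta : R}.

Lemma lemma6p5_integrand_ge0 {delta s1 s2 t : R} :
  0 < delta -> 0 <= s1 -> 0 <= s2 -> 0 <= t ->
  0 <= lemma6p5_integrand n alpha beta delta s1 s2 t.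
Proof.
move=> d0 s10 s20 t0; have E0 : 0 <= delta + s1 + s2 + t by lra.
by rewrite divr_ge0 ?mulr_ge0 ?powR_ge0 ?exprn_ge0.
Qed.

Lemma lemma6p5_integrand_le {delta s1 s2 t : R} :
  0 < delta -> 0 <= s1 -> 0 <= s2 -> 0 <= t ->
  lemma6p5_integrand n alpha beta delta s1 s2 t <=
  s1 `^ alpha * (delta + s1 + s2 + t ^+ 2) `^ (- (2 + beta)).
Proof.
move=> d0 s10 s20 t0; rewrite /lemma6p5_integrand.
set D := delta + s1 + s2 + t ^+ 2; set E := delta + s1 + s2 + t.
have D0 : 0 < D by rewrite /D; have := sqr_ge0 t; lra.
have E0 : 0 < E by rewrite /E; lra.
have tE : t ^+ (2 * n - 3) / E ^+ (2 * n - 3) <= 1.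
  by rewrite ler_pdivrMr ?exprn_gt0 // mul1r lerXn2r ?nnegrE ?(ltW E0) // /E; lra.
have -> : s1 `^ alpha * t ^+ (2 * n - 3) / (D `^ (2 + beta) * E ^+ (2 * n - 3)) =
    s1 `^ alpha * D `^ (- (2 + beta)) * (t ^+ (2 * n - 3) / E ^+ (2 * n - 3)).
  by rewrite powRN invfM; field; rewrite !gt_eqF ?powR_gt0 ?exprn_gt0.
by rewrite ler_piMr // mulr_ge0 ?powR_ge0.
Qed.

Lemma lemma6p5_integrand_le_kernels {delta s1 s2 t : R} (p1 p2 p3 : R) :
  0 < delta -> 0 <= s1 -> 0 <= s2 -> 0 <= t ->
  0 <= p1 -> 0 <= p2 -> 0 <= p3 -> p1 + p2 + p3 = 2 + beta ->
  lemma6p5_integrand n alpha beta delta s1 s2 t <=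
  2 `^ p3 * (powR_kernel alpha p1 delta s1 * powR_kernel 0 p2 delta s2 *
             powR_kernel 0 (2 * p3) (Num.sqrt delta) t).
Proof.
move=> d0 s10 s20 t0 p10 p20 p30 p123.
apply: le_trans (lemma6p5_integrand_le d0 s10 s20 t0) _.
set c := Num.sqrt delta; set D := delta + s1 + s2 + t ^+ 2.
have c0 : 0 < c by rewrite sqrtr_gt0.
have t2 := sqr_ge0 t.
have ct : (c + t) ^+ 2 / 2 <= D.
  rewrite /D -(sqr_sqrtr (ltW d0)) -/c; have := sqr_ge0 (c - t); rewrite !expr2; lra.
have le_D : D `^ (- (p1 + p2 + p3)) <=
    (delta + s1) `^ (- p1) * (delta + s2) `^ (- p2) * ((c + t) ^+ 2 / 2) `^ (- p3).
  apply: powRN_addr_le => //; apply/andP; split; rewrite /D in ct *; try lra.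
  by rewrite divr_gt0 // exprn_gt0 // (lt_le_trans c0) // lerDl.
rewrite p123 (powRN_sqr_half _ _ (addr_ge0 (ltW c0) t0)) in le_D.
rewrite /powR_kernel !powRr0 !mul1r.
by apply: le_trans (ler_wpM2l (powR_ge0 _ _) le_D) _; lra.
Qed.

Lemma lemma6p5_integral_le {delta p1 p2 p3 : R} :
  0 < delta -> delta < 1 -> -1 < alpha ->
  alpha + 1 < p1 -> 1 < p2 -> 1 < 2 * p3 -> p1 + p2 + p3 = 2 + beta ->
  (lemma6p5_integral n alpha beta delta <=
   (2 `^ p3 * (powR_kernel_const alpha p1 * delta `^ (alpha + 1 - p1))
            * (powR_kernel_const 0 p2 * delta `^ (1 - p2))
            * (powR_kernel_const 0 (2 * p3) * Num.sqrt delta `^ (1 - 2 * p3)))%:E)%E.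
Proof.
move=> d0 d1 a1 p1_gt p2_gt p3_gt p123.
set c := Num.sqrt delta.
have c0 : 0 < c by rewrite sqrtr_gt0.
have c1 : c < 1 by rewrite -sqrtr1 ltr_sqrt.
have p2_gt' : 0 + 1 < p2 by rewrite add0r.
have p3_gt' : 0 + 1 < 2 * p3 by rewrite add0r.
have hM1 := integral_powR_kernel_le a1 p1_gt d0 d1.
have hM2 := integral_powR_kernel_le (ltrN10 R) p2_gt' d0 d1.
have hM3 := integral_powR_kernel_le (ltrN10 R) p3_gt' c0 c1.
have in01_ge0 (x : R) : `[0%R, 1%R]%classic x -> 0 <= x.
  by rewrite /= in_itv /= => /andP[].
rewrite /lemma6p5_integral.
apply: le_trans
  (integral3_le_prod (k := 2 `^ p3) _ _ _ _ _ _ _ _ hM1 hM2 hM3 _ _) _ => //.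
- exact: measurable_funTS (measurable_powR_kernel _ _ _).
- exact: measurable_funTS (measurable_powR_kernel _ _ _).
- exact: measurable_funTS (measurable_powR_kernel _ _ _).
- by move=> *; exact: powR_kernel_ge0.
- by move=> *; exact: powR_kernel_ge0.
- by move=> *; exact: powR_kernel_ge0.
- move=> x y z /in01_ge0 x0 /in01_ge0 y0 /in01_ge0 z0.
  exact: lemma6p5_integrand_ge0.
- move=> x y z /in01_ge0 x0 /in01_ge0 y0 /in01_ge0 z0.
  by apply: lemma6p5_integrand_le_kernels => //; lra.
- by rewrite !add0r.
Qed.

End lemma6p5_bounds.

Theorem lemma6p5 (R : realType) (n : nat) (alpha beta : R)
  (hn : (2 <= n)%N) (hbeta : 0 <= beta) (halpha : -1 < alpha)
  (hab : alpha < beta - 2^-1) :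
  exists C : R, forall delta : R, 0 < delta -> delta < 2^-1 ->
    (lemma6p5_integral n alpha beta delta
       <= (C * delta `^ (alpha - beta + 2^-1))%:E)%E.
Proof.
set e := (beta - alpha - 2^-1) / 3.
have e_gt0 : 0 < e by rewrite divr_gt0 //; lra.
set p1 := alpha + 1 + e; set p2 := 1 + e; set p3 := 2^-1 + e.
exists (2 `^ p3 * (powR_kernel_const alpha p1 * powR_kernel_const 0 p2 *
                  powR_kernel_const 0 (2 * p3))) => delta d0 d_lt.
have p123 : p1 + p2 + p3 = 2 + beta by rewrite /p1 /p2 /p3 /e; field.
apply: le_trans (lemma6p5_integral_le n d0 _ halpha _ _ _ p123) _.
1-4: by rewrite /p1 /p2 /p3; lra.
have exp1 : alpha + 1 - p1 = - e by rewrite /p1; ring.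
have exp2 : 1 - p2 = - e by rewrite /p2; ring.
have exp3 : 2^-1 * (1 - 2 * p3) = - e by rewrite /p3; field.
have exp4 : alpha - beta + 2^-1 = - e + - e + - e by rewrite /e; field.
rewrite -powR12_sqrt ?(ltW d0) // -powRrM exp1 exp2 exp3 exp4.
rewrite !(powRD (x := delta)) ?(gt_eqF d0) ?implybT //.
by rewrite lee_fin; lra.
Qed.
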